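(* Let $G=(V,E)$ be an undirected graph with two distinct vertices $s,t\in V$ and let $k$ be an integer. Let $G''$ be the graph obtained from $G$ by adding two new vertices $s',t'$ and the two edges $\{s',s\}$ and $\{t,t'\}$, and let $G'$ be the third power of $G''$. Then there is a set $S\subseteq V\setminus\{s,t\}$ such that $G-S$ has no $s$-$t$ path and $|N_G[S]|\le k$ if and only if there is a set $S'\subseteq V(G')\setminus\{s',t'\}$ such that $G'-S'$ has no $s'$-$t'$ path and $|S'|\le k$.
   Context: For $x\in\mathbb{N}$, the $x$-th power of a graph $H=(V,E)$ is the graph on vertex set $V$ in which two distinct vertices $u,v$ are adjacent if and only if their distance in $H$ is at most $x$. $N_G[S]=S\cup\bigcup_{v\in S}N_G(v)$ denotes the closed neighborhood of $S$ in $G$. *)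

From mathcomp Require Import all_boot all_order all_algebra.
Set Implicit Arguments. Unset Strict Implicit. Unset Printing Implicit Defensive.

(* A finite simple undirected graph is given by a symmetric irreflexive
   boolean relation e on a finType T. *)

Fixpoint within_dist (T : finType) (e : rel T) (n : nat) (u v : T) : bool :=
  match n with
  | 0 => u == v
  | n'.+1 => within_dist e n' u v || [exists w, within_dist e n' u w && e w v]
  end.

Definition graph_power (T : finType) (e : rel T) (x : nat) : rel T :=
  fun u v => (u != v) && within_dist e x u v.

Definition del_verts (T : finType) (e : rel T) (S : {set T}) : rel T :=
  fun u v => [&& u \notin S, v \notin S & e u v].

Definition has_path_avoiding (T : finType) (e : rel T) (S : {set T}) (s t : T) : bool :=
  (s \notin S) && connect (del_verts e S) s t.

Definition closed_nbhd (T : finType) (e : rel T) (S : {set T}) : {set T} :=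
  S :|: [set v | [exists u in S, e u v]].

(* The graph G'' on T + bool: inr false = s', inr true = t';
   edges of G plus {s',s} and {t,t'}. *)
Definition ext_graph (T : finType) (e : rel T) (s t : T) : rel (T + bool)%type :=
  fun x y =>
    match x, y with
    | inl a, inl b => e a b
    | inl a, inr b => if b then a == t else a == s
    | inr a, inl b => if a then b == t else b == s
    | inr _, inr _ => false
    end.

Definition s' (T : finType) : (T + bool)%type := inr false.
Definition t' (T : finType) : (T + bool)%type := inr true.

From mathcomp Require Import all_boot all_order all_algebra.
Import Order.TTheory.
Set Implicit Arguments. Unset Strict Implicit.

(* If S separates s from t in G, then N_G[S] separates s' from t' in G':
   a walk with at most three edges in G'' whose ends lie outside N_G[S]
   never meets S, so an s'-t' path of G' - N_G[S] projects to an s-t walk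
   of G - S.  Conversely, if X separates s' from t' in G', let S be the set
   of vertices of G whose closed neighbourhood in G'' lies inside X; then
   N_G[S] is contained in X, and along an s-t walk of G - S every vertex has
   a G''-neighbour (or itself) outside X, consecutive such vertices being at
   distance at most 3, which would give an s'-t' path of G' - X. *)

Section WithinDist.
Variables (U : finType) (r : rel U).

Lemma within_distS n u v : within_dist r n u v -> within_dist r n.+1 u v.
Proof. by move=> h /=; rewrite h. Qed.

Lemma within_dist_leq m n u v :
  m <= n -> within_dist r m u v -> within_dist r n u v.
Proof.
move=> /subnK <-; elim: (n - m) => [|d IH] h //.
by rewrite addSn; apply/within_distS/IH.
Qed.

Lemma within_dist1 u v : within_dist r 1 u v = (u == v) || r u v.
Proof.
rewrite /=; congr (_ || _); apply/existsP/idP=> [[w /andP[/eqP <-]] // | h].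
by exists u; rewrite eqxx.
Qed.

Lemma within_dist_trans m n u w v :
  within_dist r m u w -> within_dist r n w v -> within_dist r (m + n) u v.
Proof.
move=> h1; elim: n v => [|n IH] v /=; first by move/eqP <-; rewrite addn0.
case/orP=> [h | /existsP[x /andP[hx hxv]]]; rewrite addnS /=.
  by rewrite IH.
by apply/orP; right; apply/existsP; exists x; rewrite IH.
Qed.

Lemma within_distP n u v : within_dist r n u v ->
  exists p, [/\ path r u p, last u p = v & size p <= n].
Proof.
elim: n v => [|n IH] v /=; first by move/eqP <-; exists [::].
case/orP=> [/IH[p [hp hl hs]] | /existsP[x /andP[/IH[p [hp hl hs]] hxv]]].
  by exists p; rewrite ltnW.
by exists (rcons p v); rewrite rcons_path last_rcons size_rcons hp hl hxv.
Qed.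

Lemma connect_graph_power n (X : {set U}) u v :
  u \notin X -> v \notin X -> within_dist r n u v ->
  connect (del_verts (graph_power r n) X) u v.
Proof.
move=> hu hv huv; have [-> | neq] := eqVneq u v; first exact: connect0.
by apply: connect1; rewrite /del_verts hu hv /graph_power neq huv.
Qed.

Lemma connect_homo (U' : finType) (r' : rel U') (f : U -> U') :
  (forall x y, r x y -> connect r' (f x) (f y)) ->
  forall x y, connect r x y -> connect r' (f x) (f y).
Proof.
move=> hom x y /connectP[p]; elim: p x => [|z p IH] x /=; first by move=> _ ->.
by case/andP=> hxz hp hy; apply: connect_trans (hom _ _ hxz) (IH _ hp hy).
Qed.

End WithinDist.

Section ClosedNbhd.
Variables (U : finType) (r : rel U).
Hypothesis r_sym : symmetric r.

Lemma in_closed_nbhd (A : {set U}) v :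
  (v \in closed_nbhd r A) = (v \in A) || [exists u in A, r u v].
Proof. by rewrite !inE. Qed.

Lemma closed_nbhdS (A B : {set U}) :
  A \subset B -> closed_nbhd r A \subset closed_nbhd r B.
Proof.
move=> /subsetP sAB; apply/subsetP=> v; rewrite !in_closed_nbhd.
case/orP=> [/sAB -> // | /existsP[u /andP[/sAB uB ruv]]].
by apply/orP; right; apply/existsP; exists u; rewrite uB.
Qed.

Lemma notin_closed_nbhd (A : {set U}) x y :
  x \notin closed_nbhd r A -> (x == y) || r x y -> y \notin A.
Proof.
rewrite in_closed_nbhd negb_or => /andP[xA nxA] /orP[/eqP <- // | rxy].
apply: contra nxA => yA; apply/existsP; exists y; by rewrite yA r_sym.
Qed.

Lemma path_del_verts (A : {set U}) x p :
  path r x p -> all [predC A] (x :: p) -> path (del_verts r A) x p.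
Proof.
elim: p x => [|y p IH] x //= /andP[rxy hp] /and3P[xA yA hA].
by rewrite /del_verts xA yA rxy IH //= yA.
Qed.

Lemma short_path_avoid (A : {set U}) x p :
  path r x p -> size p <= 3 -> x \notin closed_nbhd r A ->
  last x p \notin closed_nbhd r A -> all [predC A] (x :: p).
Proof.
move=> hp hs hx hy; have near_x := notin_closed_nbhd hx.
have near_y := notin_closed_nbhd hy.
move: hp hs hy near_y; case: p => [|a [|b [|c []]]] //= hp _ hy near_y.
- by rewrite (near_x x) ?eqxx.
- by rewrite (near_x x) ?(near_y a) ?eqxx.
- move: hp => /andP[rxa _].
  by rewrite (near_x x) ?(near_x a) ?rxa ?orbT ?(near_y b) ?eqxx.
- move: hp => /and4P[rxa rab rbc _].
  rewrite (near_x x) ?(near_x a) ?rxa ?orbT ?(near_y c) ?eqxx //=.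
  by rewrite (near_y b) // r_sym rbc orbT.
Qed.

Lemma connect_power_del_closed_nbhd n (A : {set U}) x y : n <= 3 ->
  connect (del_verts (graph_power r n) (closed_nbhd r A)) x y ->
  connect (del_verts r A) x y.
Proof.
move=> n3; apply: connect_sub => {}x {}y /and3P[hx hy /andP[_ hxy]].
have [p [hp hl hs]] := within_distP hxy; subst y.
have hA := short_path_avoid hp (leq_trans hs n3) hx hy.
by apply/connectP; exists p => //; apply: path_del_verts.
Qed.

Definition nbhd_interior (X : {set U}) : {set U} :=
  [set x | closed_nbhd r [set x] \subset X].

Lemma nbhd_interiorP (X : {set U}) x :
  reflect (forall y, (x == y) || r x y -> y \in X) (x \in nbhd_interior X).
Proof.
rewrite inE; apply: (iffP subsetP) => h y hy; apply: h.
  rewrite in_closed_nbhd; case/orP: hy => [/eqP <- | rxy]; first by rewrite set11.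
  by apply/orP; right; apply/existsP; exists x; rewrite set11.
move: hy; rewrite in_closed_nbhd in_set1 => /orP[/eqP -> | /existsP[u]];
  first by rewrite eqxx.
by rewrite in_set1 => /andP[/eqP -> ->]; rewrite orbT.
Qed.

Lemma closed_nbhd_interior (X : {set U}) :
  closed_nbhd r (nbhd_interior X) \subset X.
Proof.
apply/subsetP=> v; rewrite in_closed_nbhd.
case/orP=> [/nbhd_interiorP -> // | /existsP[u /andP[/nbhd_interiorP uX ruv]]].
  by rewrite eqxx.
by rewrite uX ?ruv ?orbT.
Qed.

Lemma notin_nbhd_interior (X : {set U}) x :
  x \notin nbhd_interior X -> exists2 w, w \notin X & within_dist r 1 x w.
Proof.
move=> /nbhd_interiorP hx.
have [w /andP[hw wX] | none] := pickP [pred w | ((x == w) || r x w) && (w \notin X)].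
  by exists w; rewrite ?within_dist1.
by exfalso; apply: hx => y hy; move: (none y); rewrite /= hy => /negbFE.
Qed.

Lemma connect_del_interior (X : {set U}) x y u v :
  u \notin X -> v \notin X -> within_dist r 1 u x -> within_dist r 1 y v ->
  connect (del_verts r (nbhd_interior X)) x y ->
  connect (del_verts (graph_power r 3) X) u v.
Proof.
move=> hu hv hux hyv /connectP[p]; elim: p x u hu hux => [|z p IH] x u hu hux /=.
  move=> _ yx; apply: connect_graph_power => //; subst y.
  exact: within_dist_leq (within_dist_trans hux hyv).
case/andP=> /and3P[_ zX rxz] hp hy.
have [w hw hzw] := notin_nbhd_interior zX.
apply: connect_trans (IH z w hw _ hp hy); last first.
  by move: hzw; rewrite !within_dist1 eq_sym r_sym.
apply: connect_graph_power => //.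
have hxz : within_dist r 1 x z by rewrite within_dist1 rxz orbT.
exact: within_dist_trans (within_dist_trans hux hxz) hzw.
Qed.

End ClosedNbhd.

Section ExtGraph.
Variables (T : finType) (e : rel T) (s t : T).
Hypothesis e_sym : symmetric e.
Local Notation ext := (ext_graph e s t).

Lemma ext_graph_sym : symmetric ext.
Proof. by case=> [a|[]] [b|[]] //=; rewrite ?e_sym // eq_sym. Qed.

Definition ext_proj (x : T + bool) : T :=
  match x with inl a => a | inr b => if b then t else s end.

Lemma closed_nbhd_ext_inl (S : {set T}) : s \notin S -> t \notin S ->
  closed_nbhd ext (inl @: S) = inl @: closed_nbhd e S.
Proof.
move=> sS tS; have inl_inj : injective (@inl T bool) by move=> ? ? [].
apply/setP=> [[a|b]]; rewrite in_closed_nbhd.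
  rewrite !mem_imset // in_closed_nbhd; congr (_ || _).
  apply/existsP/existsP=> [[_ /andP[/imsetP[u uS ->] hua]] | [u /andP[uS hua]]].
    by exists u; rewrite uS.
  by exists (inl u); rewrite mem_imset ?uS.
have /negbTE -> : inr b \notin inl @: closed_nbhd e S by apply/imsetP; case.
apply/negbTE; rewrite negb_or; apply/andP; split; first by apply/imsetP; case.
apply/existsP=> [[_ /andP[/imsetP[u uS ->]]]]; case: b => /= /eqP uE.
  by rewrite -uE uS in tS.
by rewrite -uE uS in sS.
Qed.

Lemma ext_proj_del_verts (S : {set T}) : s \notin S -> t \notin S -> forall x y,
  del_verts ext (inl @: S) x y -> connect (del_verts e S) (ext_proj x) (ext_proj y).
Proof.
move=> sS tS x y /and3P[xS yS exy].
have proj_notin z : z \notin inl @: S -> ext_proj z \notin S.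
  by case: z => [a|[]] /= zS //; apply: contra zS; apply: imset_f.
have [-> | neq] := eqVneq (ext_proj x) (ext_proj y); first exact: connect0.
apply: connect1; rewrite /del_verts !proj_notin //=.
by move: exy neq; case: x {xS} => [a|[]]; case: y {yS} => [b|[]] //= /eqP ->;
  rewrite eqxx.
Qed.

Lemma connect_del_verts_inl (A : {set T + bool}) a b :
  connect (del_verts e (inl @^-1: A)) a b -> connect (del_verts ext A) (inl a) (inl b).
Proof.
apply: connect_homo => u v /and3P[uA vA euv].
by rewrite !inE in uA vA; apply: connect1; rewrite /del_verts uA vA.
Qed.

Lemma cut_of_nbhd_cut (S : {set T}) : s \notin S -> t \notin S ->
  ~~ has_path_avoiding e S s t ->
  ~~ has_path_avoiding (graph_power ext 3) (inl @: closed_nbhd e S) (s' T) (t' T).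
Proof.
move=> sS tS noST; rewrite -closed_nbhd_ext_inl //; apply/negP=> /andP[_].
move=> /(connect_power_del_closed_nbhd ext_graph_sym (leqnn 3)).
move=> /(connect_homo (ext_proj_del_verts sS tS)) /= hST.
by rewrite /has_path_avoiding sS hST in noST.
Qed.

Definition interior_trace (X : {set T + bool}) : {set T} :=
  inl @^-1: nbhd_interior ext X.

Lemma notin_interior_trace (X : {set T + bool}) x a :
  x \notin X -> ext (inl a) x -> a \notin interior_trace X.
Proof.
move=> xX ax; rewrite inE; apply: contra xX => /nbhd_interiorP; apply.
by rewrite ax orbT.
Qed.

Lemma nbhd_cut_of_cut (X : {set T + bool}) : s' T \notin X -> t' T \notin X ->
  ~~ has_path_avoiding (graph_power ext 3) X (s' T) (t' T) ->
  ~~ has_path_avoiding e (interior_trace X) s t.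
Proof.
move=> sX tX noST; apply/negP=> /andP[_ /connect_del_verts_inl hST].
suff hc : connect (del_verts (graph_power ext 3) X) (s' T) (t' T).
  by rewrite /has_path_avoiding sX hc in noST.
by apply: (connect_del_interior ext_graph_sym sX tX _ _ hST);
  rewrite within_dist1 /= eqxx ?orbT.
Qed.

Lemma card_closed_nbhd_interior_trace (X : {set T + bool}) :
  s \notin interior_trace X -> t \notin interior_trace X ->
  #|closed_nbhd e (interior_trace X)| <= #|X|.
Proof.
move=> sS tS; have inl_inj : injective (@inl T bool) by move=> ? ? [].
rewrite -(card_imset _ inl_inj) -closed_nbhd_ext_inl //.
apply/subset_leq_card/(subset_trans _ (closed_nbhd_interior _ X))/closed_nbhdS.
by apply/subsetP=> _ /imsetP[a aS ->]; rewrite inE in aS.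
Qed.

End ExtGraph.

Theorem lemma1 (T : finType) (e : rel T) (he_sym : symmetric e)
    (he_irr : irreflexive e) (s t : T) (hst : s != t) (k : int) :
  (exists S : {set T},
      [/\ s \notin S, t \notin S, ~~ has_path_avoiding e S s t
        & (#|closed_nbhd e S|%:Z <= k)%R])
  <->
  (exists S' : {set (T + bool)%type},
      [/\ s' T \notin S', t' T \notin S',
          ~~ has_path_avoiding (graph_power (ext_graph e s t) 3) S' (s' T) (t' T)
        & (#|S'|%:Z <= k)%R]).
Proof.
split=> [[S [sS tS noST hk]] | [X [sX tX noST hk]]].
  exists (inl @: closed_nbhd e S); split; try by apply/imsetP; case.
    exact: cut_of_nbhd_cut.
  by rewrite card_imset //; move=> ? ? [].
have sS : s \notin interior_trace e s t X.
  by apply: (notin_interior_trace sX); rewrite /= eqxx.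
have tS : t \notin interior_trace e s t X.
  by apply: (notin_interior_trace tX); rewrite /= eqxx.
exists (interior_trace e s t X); split=> //; first exact: nbhd_cut_of_cut.
by apply: le_trans hk; rewrite lez_nat card_closed_nbhd_interior_trace.
Qed.
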